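(* Let $R=k[x_{ij}\mid1\le i\le n,1\le j\le m]$ over a field $k$, $n\le m$, and fix pairwise disjoint index sets $\sigma_1,\dots,\sigma_r\subseteq[m]$, each of size $n$. For each $j$ and $\ell\ge1$ let $q^j_\ell:D_\ell(G^* )\otimes\bigwedge^{n+\ell}F\to\bigwedge^\ell U_j$ be the map sending $g^{*(\alpha)}\otimes f_{\tau_1}\wedge\cdots\wedge f_{\tau_\ell}\wedge f_{\sigma_j}\mapsto(-1)^n\sum_{L\in\mathcal L_{\alpha,\tau}}e_{L_1}\wedge\cdots\wedge e_{L_\ell}$ for every $\tau=(\tau_1<\cdots<\tau_\ell)$ with $\tau\cap\sigma_j=\varnothing$ and $|\alpha|=\ell$, and sending all basis elements $g^{*(\alpha)}\otimes f_\rho$ with $\rho\not\supseteq\sigma_j$ to $0$. Then $$\operatorname{rank}_k\left(\begin{pmatrix}q^1_\ell\\ \vdots\\ q^r_\ell\end{pmatrix}\otimes k\right)=\binom{n+\ell-1}{\ell}\sum_{i=1}^r(-1)^{i+1}\binom{r}{i}\binom{m-in}{\ell-(i-1)n}.$$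
   Context: $F$ free with basis $f_1,\dots,f_m$, $G$ free with basis $g_1,\dots,g_n$, dual basis $g_i^*$; $D_\ell(G^* )$ the divided power with basis $g^{*(\alpha)}=g_1^{*(\alpha_1)}\cdots g_n^{*(\alpha_n)}$, $|\alpha|=\ell$; $f_\rho$ is the wedge of $f_s$, $s\in\rho$, in increasing order, and $f_{\sigma_j}=f_{\sigma_{j1}}\wedge\cdots\wedge f_{\sigma_{jn}}$. $U_j$ is free with basis $e_{is}$, $1\le i\le n$, $s\notin\sigma_j$, with $e_{(i,s)}=e_{is}$. For $\tau=(\tau_1<\dots<\tau_\ell)$ and $\alpha\in\mathbb Z^n_{\ge0}$, $\mathcal L_{\alpha,\tau}$ is the set of sets $L=\{(r_1,\tau_1),\dots,(r_\ell,\tau_\ell)\}$ with $r_s\in\{i:\alpha_i\ne0\}$ and $|\{s:r_s=j\}|=\alpha_j$ for all $j$, written $L=(L_1,\dots,L_\ell)$ with $L_s=(r_s,\tau_s)$. The stacked map goes to $\bigoplus_j\bigwedge^\ell U_j$. Convention: $\binom{a}{b}=0$ if $b>a$ or $b<0$. *)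

From HB Require Import structures.
From mathcomp Require Import all_boot all_order all_algebra.
Set Implicit Arguments. Unset Strict Implicit. Unset Printing Implicit Defensive.
Import Order.TTheory GRing.Theory Num.Theory.
Local Open Scope ring_scope.

(* Indices are 0-based: [n] = 'I_n, [m] = 'I_m, j ranges over 'I_r.
   Basis of D_l(G^* ) : alpha : 'I_n -> nat with |alpha| = l
     (encoded as {ffun 'I_n -> 'I_l.+1}, entries are automatically <= l).
   Basis of /\^{n+l} F : f_rho, rho : {set 'I_m}, #|rho| = n + l.
   Basis of U_j : e_(i,s), (i,s) : 'I_n * 'I_m, s \notin sigma_j,
     ordered lexicographically (first i, then s).
   Basis of /\^l U_j : e_S = wedge of the elements of S in that order,
     S an l-subset of the basis of U_j. *)

Definition Lset (n m l : nat) (alpha : {ffun 'I_n -> 'I_l.+1}) (tau : {set 'I_m})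
  : {set {set ('I_n * 'I_m)}} :=
  [set L | [exists rr : {ffun 'I_m -> 'I_n},
     [&& L == [set (rr t, t) | t in tau],
         [forall t in tau, nat_of_ord (alpha (rr t)) != 0%N] &
         [forall i, #|[set t in tau | rr t == i]| == nat_of_ord (alpha i)]]]].

(* e_{L_1} /\ ... /\ e_{L_l} (L listed with increasing second coordinates)
   equals wedge_sign L * e_L, e_L the basis vector (lexicographic order). *)
Definition wedge_sign (K : fieldType) (n m : nat) (L : {set ('I_n * 'I_m)}) : K :=
  (-1) ^+ #|[set pq : ('I_n * 'I_m) * ('I_n * 'I_m) |
              [&& pq.1 \in L, pq.2 \in L, (pq.1.2 < pq.2.2)%N & (pq.2.1 < pq.1.1)%N]]|.

(* f_rho = col_sign tau sigma * (f_tau /\ f_sigma) when rho = tau (disjoint union) sigma. *)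
Definition col_sign (K : fieldType) (m : nat) (tau sigma : {set 'I_m}) : K :=
  (-1) ^+ #|[set ab : 'I_m * 'I_m |
              [&& ab.1 \in tau, ab.2 \in sigma & (ab.2 < ab.1)%N]]|.

(* Coefficient of e_S in q^j_l (g^{*(alpha)} (x) f_rho), where sigmaj = sigma_j. *)
Definition q_entry (K : fieldType) (n m l : nat) (sigmaj : {set 'I_m})
  (S : {set ('I_n * 'I_m)}) (alpha : {ffun 'I_n -> 'I_l.+1}) (rho : {set 'I_m}) : K :=
  if sigmaj \subset rho then
    let tau := rho :\: sigmaj in
    (-1) ^+ n * @col_sign K m tau sigmaj *
      \sum_(L in @Lset n m l alpha tau) (if L == S then @wedge_sign K n m L else 0)
  else 0.

(* Row index set of the stacked map: pairs (j, S) with S a basis element of /\^l U_j. *)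
Definition qrows (n m l r : nat) (sigma : 'I_r -> {set 'I_m})
  : {pred ('I_r * {set ('I_n * 'I_m)})} :=
  [pred x : 'I_r * {set ('I_n * 'I_m)} | (#|x.2| == l) && [forall p in x.2, p.2 \notin sigma x.1]].

(* Column index set: basis g^{*(alpha)} (x) f_rho of D_l(G^* ) (x) /\^{n+l} F. *)
Definition qcols (n m l : nat) : {pred ({ffun 'I_n -> 'I_l.+1} * {set 'I_m})} :=
  [pred y : {ffun 'I_n -> 'I_l.+1} * {set 'I_m} | ((\sum_i nat_of_ord (y.1 i))%N == l) && (#|y.2| == n + l)%N].

(* Matrix over k of the stacked map (q^1_l ; ... ; q^r_l) (x) k
   (rows: codomain basis, columns: domain basis). *)
Definition qmatrix (K : fieldType) (n m l r : nat) (sigma : 'I_r -> {set 'I_m})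
  : 'M[K]_(#|@qrows n m l r sigma|, #|@qcols n m l|) :=
  \matrix_(a, b)
    @q_entry K n m l (sigma (enum_val a).1) (enum_val a).2 (enum_val b).1 (enum_val b).2.

Definition binz (a b : int) : int :=
  if (0 <= b) && (b <= a) then ('C(`|a|%N, `|b|%N))%:Z else 0.

From HB Require Import structures.
From mathcomp Require Import all_boot all_order all_algebra zify.
Import Order.TTheory GRing.Theory Num.Theory.
Local Open Scope ring_scope.

(* In the monomial bases the entry of q^j_l in row e_S (of /\^l U_j) and column
   g^{*(alpha)} (x) f_rho is a sign when sigma_j is contained in rho and
   S is in L_{alpha, rho \ sigma_j}, and 0 otherwise.  An element of
   L_{alpha,tau} determines alpha and tau, and rho = tau (disjoint union) sigma_j,
   so every row has at most one nonzero entry; hence the rank is the number of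
   nonzero columns.  For |alpha| = l >= 1 the set L_{alpha,tau} is nonempty
   (take the graph of a map tau -> [n] with fibre sizes alpha), so a column is
   nonzero iff rho contains some sigma_j.  The number of nonzero columns is thus
     #{alpha : |alpha| = l} * #{rho : |rho| = n + l, rho contains some sigma_j}.
   The first factor counts weak compositions, C(n+l-1, l); the second follows by
   inclusion-exclusion over sets J of indices, the union of the sigma_j (j in J)
   having |J| n elements. *)

Section NonzeroColumns.

Context {F : fieldType} {p q : nat} (M : 'M[F]_(p, q)).

Definition nonzero_cols : {set 'I_q} := [set j | [exists i, M i j != 0]].

Let C := nonzero_cols.
Let g (k : 'I_#|C|) : 'I_q := enum_val k.
Let g_inj : injective g := @enum_val_inj _ _.

(* M factors through its nonzero columns, hence its rank is at most their number. *)
Lemma mxrank_le_nonzero_cols : (\rank M <= #|C|)%N.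
Proof.
pose E : 'M[F]_(#|C|, q) := \matrix_(k, j) (g k == j)%:R.
suff -> : M = colsub g M *m E by apply: mulmx_max_rank.
apply/matrixP => i j; rewrite !mxE.
have [jC | jNC] := boolP (j \in C).
  rewrite (bigD1 (enum_rank_in jC j)) //= !mxE /g enum_rankK_in // eqxx mulr1.
  rewrite big1 ?addr0 // => k k_neq; rewrite !mxE.
  case: eqP => [gk_j | _]; last by rewrite mulr0.
  by case/eqP: k_neq; apply: g_inj; rewrite gk_j /g enum_rankK_in.
rewrite big1 => [|k _]; last first.
  by rewrite !mxE; case: eqP => [gk_j | _]; [move: jNC; rewrite -gk_j enum_valP | rewrite mulr0].
by move: jNC; rewrite inE negb_exists => /forallP /(_ i); rewrite negbK => /eqP.
Qed.

(* If each row has at most one nonzero entry, choosing for every nonzero column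
   a row where it is nonzero yields an invertible diagonal submatrix. *)
Lemma mxrank_nonzero_cols :
  (forall i j j', M i j != 0 -> M i j' != 0 -> j = j') -> \rank M = #|C|.
Proof.
move=> row_support; apply/eqP; rewrite eqn_leq mxrank_le_nonzero_cols /=.
have witness k : exists i, M i (g k) != 0 by have := enum_valP k; rewrite inE => /existsP.
pose f k := xchoose (witness k).
have fP k : M (f k) (g k) != 0 := xchooseP (witness k).
pose N := rowsub f (colsub g M).
have N_diag : N = diag_mx (\row_k M (f k) (g k)).
  apply/matrixP => k k'; rewrite !mxE.
  case: eqP => [-> | k_neq]; first by rewrite mulr1n.
  rewrite mulr0n; apply/eqP; apply: contraT => N_kk'.
  by case: k_neq; apply: g_inj; apply: row_support (fP k) N_kk'.
have N_unit : N \in unitmx.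
  by rewrite unitmxE N_diag det_diag unitfE; apply/prodf_neq0 => k _; rewrite mxE.
rewrite -(mxrank_unit N_unit) /N rowsubE.
apply: leq_trans (mxrankM_maxr _ _) _.
rewrite -[M in colsub _ M](mulmx1 M) -mulmx_colsub.
exact: mxrankM_maxl.
Qed.

End NonzeroColumns.

Lemma card_compositions (n : nat) [l : nat] : (0 < l)%N ->
  #|[set a : {ffun 'I_n -> 'I_l.+1} | \sum_i nat_of_ord (a i) == l]| =
  'C(n + l - 1, l).
Proof.
move=> l_gt0; case: n => [|n].
  rewrite add0n bin_small ?ltn_subrL ?l_gt0 //.
  by apply: eq_card0 => a; rewrite inE big_ord0 eq_sym eqn0Ngt l_gt0.
rewrite addSn subn1 /= -bin_sub ?leq_addl // addnK -card_ord_partitions.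
pose tuple_of (a : {ffun 'I_n.+1 -> 'I_l.+1}) := [tuple a i | i < n.+1].
have tuple_ofK : cancel tuple_of (fun t => [ffun i => tnth t i]).
  by move=> a; apply/ffunP => i; rewrite ffunE tnth_mktuple.
rewrite -(card_imset _ (can_inj tuple_ofK)); apply: eq_card => t.
rewrite inE; apply/imsetP/idP => [[a] | sum_t].
  rewrite inE => /eqP sum_a ->; rewrite big_tuple /=.
  by under eq_bigr do rewrite tnth_mktuple; rewrite sum_a.
exists [ffun i => tnth t i].
  by rewrite inE; under eq_bigr do rewrite ffunE; rewrite big_tuple in sum_t.
by apply: eq_from_tnth => i; rewrite tnth_mktuple ffunE.
Qed.

Lemma exists_fibers [T I : finType] (A : {set T}) [a : I -> nat] (i0 : I) :
  (\sum_i a i)%N = #|A| ->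
  exists f : {ffun T -> I}, forall i, #|[set t in A | f t == i]| = a i.
Proof.
move=> sum_a; pose s := flatten [seq nseq (a i) i | i <- enum I].
have count_s i : count_mem i s = a i.
  rewrite count_flatten -map_comp sumnE big_map big_enum (bigD1 i) //=.
  rewrite count_nseq /= eqxx mul1n big1 ?addn0 // => j j_neq.
  by rewrite count_nseq /= (negbTE j_neq).
have size_s : size s = #|A|.
  rewrite size_flatten /shape -map_comp sumnE big_map big_enum -sum_a.
  by apply: eq_bigr => i _; apply: size_nseq.
pose e := enum A; pose f := [ffun t => nth i0 s (index t e)].
have map_f : map f e = s.
  case E : e => [|t0 e']; first by apply/esym/size0nil; rewrite size_s cardE -/e E.
  rewrite -E; apply: (@eq_from_nth _ i0); first by rewrite size_map size_s cardE.
  move=> k; rewrite size_map => k_lt.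
  by rewrite (nth_map t0) // ffunE index_uniq ?enum_uniq.
exists f => i; rewrite -count_s -map_f count_map -sum1dep_card -big_enum_cond /=.
by rewrite sum1_count.
Qed.

Lemma card_bigcup_disjoint [I T : finType] [n : nat] [A : I -> {set T}] :
  (forall i, #|A i| = n) ->
  (forall i j, i != j -> [disjoint A i & A j]) ->
  forall J : {set I}, #|\bigcup_(j in J) A j| = (#|J| * n)%N.
Proof.
move=> cardA disjA J; pose B j := if j \in J then A j else set0.
have disjB i j : i != j -> [disjoint B i & B j].
  by rewrite /B -setI_eq0; do 2 case: ifP => _; rewrite ?setI0 ?set0I // setI_eq0; apply: disjA.
rewrite (big_mkcond (fun j => j \in J)) -/B -sum1_card.
rewrite (partition_disjoint_bigcup _ _ disjB) -sum_nat_const [RHS]big_mkcond /=.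
by apply: eq_bigr => j _; rewrite sum1_card /B; case: ifP; rewrite ?cardA ?cards0.
Qed.

Lemma binz_nat (a b : nat) : binz a%:Z b%:Z = ('C(a, b))%:Z.
Proof.
rewrite /binz le0z_nat lez_nat /=.
by case: leqP => // ab; rewrite bin_small.
Qed.

Lemma binz_neg (a b : int) : b < 0 -> binz a b = 0.
Proof. by rewrite /binz => /lt_geF ->. Qed.

(* The k-subsets containing U are the complements of the (#|T| - k)-subsets
   of ~: U; written with binz, the count holds for every k. *)
Lemma card_supersets (T : finType) (U : {set T}) (k : nat) :
  (#|[set rho : {set T} | (#|rho| == k) && (U \subset rho)]|)%:Z =
  binz (#|T|%:Z - #|U|%:Z) (k%:Z - #|U|%:Z).
Proof.
have [Tk | kT] := ltnP #|T| k.
  rewrite /binz lerD2r lez_nat leqNgt Tk andbF.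
  apply/eqP; rewrite eqz_nat; apply/eqP/eq_card0 => rho; rewrite inE.
  by apply/negbTE; rewrite negb_and neq_ltn (leq_ltn_trans (max_card _) Tk).
have -> : [set rho : {set T} | (#|rho| == k) && (U \subset rho)] =
    @setC T @: [set C : {set T} | C \subset ~: U & #|C| == (#|T| - k)%N].
  apply/setP => rho; rewrite inE; apply/idP/imsetP => [/andP[/eqP rhok Urho] | [C]].
    exists (~: rho); last by rewrite setCK.
    by rewrite inE setCS Urho -rhok -(cardsC rho) addKn /=.
  rewrite inE => /andP[CU /eqP cardC] ->.
  by rewrite -setCS setCK CU [#|~: C|]cardsCs setCK cardC subKn ?eqxx.
rewrite (card_imset _ (@setC_inj T)) cards_draws -[#|~: U|](addKn #|U|) cardsC.
have UT : (#|U| <= #|T|)%N := max_card _.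
rewrite subzn //; have [Uk | kU] := leqP #|U| k.
  rewrite subzn // binz_nat -[in RHS]bin_sub ?leq_sub2r //; congr (Posz 'C(_, _)); lia.
by rewrite binz_neg ?subr_lt0 ?ltz_nat // bin_small //; lia.
Qed.

(* Inclusion-exclusion for the indicator of a finite disjunction, from the
   expansion of prod_i (1 - [b i]). *)
Lemma exists_incl_excl (R : comRingType) (I : finType) (b : I -> bool) :
  ([exists i, b i]%:R : R) =
  \sum_(J : {set I} | J != set0) (-1) ^+ (#|J| + 1) * ([forall i in J, b i])%:R.
Proof.
have indicator_forall (J : {set I}) :
    \prod_(i in J) ((b i)%:R : R) = ([forall i in J, b i])%:R.
  case: (boolP [forall i in J, b i]) => [/forall_inP allb | /forall_inPn[i iJ /negbTE bi]].
    by rewrite big1 // => i /allb ->.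
  by rewrite (bigD1 i) //= bi mul0r.
have indicator_none : \prod_i (1 - ((b i)%:R : R)) = (~~ [exists i, b i])%:R.
  case: existsP => [[i bi] | nob] /=; first by rewrite (bigD1 i) //= bi subrr mul0r.
  rewrite big1 // => i _; have /negbTE -> : ~~ b i by apply/negP => bi; apply: nob; exists i.
  by rewrite subr0.
have expand : (~~ [exists i, b i])%:R =
    \sum_(J : {set I}) (-1) ^+ #|J| * ([forall i in J, b i])%:R :> R.
  rewrite -indicator_none; under eq_bigr do rewrite addrC.
  rewrite bigA_distr; apply: eq_bigr => J _.
  by rewrite -big_mkcond /= prodrN indicator_forall.
have -> : [exists i, b i]%:R = 1 - (~~ [exists i, b i])%:R :> R.
  by case: existsP; rewrite ?subr0 ?subrr.
rewrite expand (bigD1 set0) //= cards0 expr0 mul1r.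
have -> : [forall i in set0, b i] by apply/forall_inP => i; rewrite inE.
rewrite opprD addrA subrr add0r -sumrN; apply: eq_bigr => J _.
by rewrite addn1 exprS mulN1r mulNr.
Qed.

Lemma sum_subsets_by_card [V : nmodType] (I : finType) (F : nat -> V) :
  \sum_(J : {set I}) F #|J| = \sum_(i < #|I|.+1) F i *+ 'C(#|I|, i).
Proof.
rewrite (partition_big (fun J : {set I} => inord #|J| : 'I_#|I|.+1) predT) //=.
apply: eq_bigr => i _.
rewrite (eq_bigl (fun J : {set I} => #|J| == i)) => [|J].
  rewrite (eq_bigr (fun=> F i)) => [|J /eqP -> //].
  by rewrite sumr_const -card_draws; congr (_ *+ _); apply: eq_card => J; rewrite inE.
have JI : (#|J| < #|I|.+1)%N by rewrite ltnS max_card.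
by apply/eqP/eqP => [<- | J_i]; [rewrite inordK | apply: val_inj; rewrite /= inordK].
Qed.

Lemma sum_nonempty_subsets_by_card [V : zmodType] (I : finType) (F : nat -> V) :
  \sum_(J : {set I} | J != set0) F #|J| = \sum_(1 <= i < #|I|.+1) F i *+ 'C(#|I|, i).
Proof.
have := sum_subsets_by_card I F.
rewrite (bigD1 set0) //= cards0 big_ord_recl bin0 mulr1n => /addrI ->.
by rewrite big_add1 /= big_mkord.
Qed.

Lemma card_indicator_sum (T : finType) (P Q : pred T) :
  (#|[set x | P x && Q x]|)%:Z = \sum_(x | P x) (Q x)%:R.
Proof.
rewrite -sum1dep_card big_mkcondr /= -natz natr_sum.
by apply: eq_bigr => x _; case: (Q x).
Qed.

Lemma card_covering_sets [I T : finType] [n : nat] (k : nat) [A : I -> {set T}] :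
  (forall i, #|A i| = n) -> (forall i j, i != j -> [disjoint A i & A j]) ->
  (#|[set X : {set T} | (#|X| == k) && [exists i, A i \subset X]]|)%:Z =
  \sum_(1 <= i < #|I|.+1) (-1) ^+ (i + 1) * ('C(#|I|, i))%:Z *
     binz (#|T|%:Z - (i * n)%N%:Z) (k%:Z - (i * n)%N%:Z).
Proof.
move=> cardA disjA.
pose c i := binz (#|T|%:Z - (i * n)%N%:Z) (k%:Z - (i * n)%N%:Z).
have supersets_of_union (J : {set I}) :
    \sum_(X : {set T} | #|X| == k) ([forall i in J, A i \subset X])%:R = c #|J|.
  rewrite /c -(card_bigcup_disjoint cardA disjA) -card_supersets card_indicator_sum.
  apply: eq_bigr => X _; congr ((nat_of_bool _)%:R).
  apply/idP/idP => [/forall_inP sub | /bigcupsP sub].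
    by apply/bigcupsP => i /sub.
  by apply/forall_inP => i /sub.
rewrite card_indicator_sum.
under eq_bigr do rewrite exists_incl_excl.
rewrite exchange_big /=.
under eq_bigr do rewrite -mulr_sumr supersets_of_union.
rewrite (sum_nonempty_subsets_by_card I (fun i => (-1) ^+ (i + 1) * c i)).
apply: eq_bigr => i _.
by rewrite -mulr_natr natz mulrAC.
Qed.

Lemma graph_in_Lset {n m l : nat} (alpha : {ffun 'I_n -> 'I_l.+1}) (tau : {set 'I_m})
  (rr : {ffun 'I_m -> 'I_n}) :
  (forall i, #|[set t in tau | rr t == i]| = alpha i) ->
  [set (rr t, t) | t in tau] \in Lset alpha tau.
Proof.
move=> fibres; rewrite inE; apply/existsP; exists rr; apply/and3P; split => //.
  apply/forall_inP => t t_tau; rewrite -lt0n -fibres card_gt0.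
  by apply/set0Pn; exists t; rewrite inE t_tau eqxx.
by apply/forallP => i; rewrite fibres.
Qed.

Lemma Lset_data {n m l : nat} [alpha : {ffun 'I_n -> 'I_l.+1}] [tau : {set 'I_m}]
  [L : {set 'I_n * 'I_m}] : L \in Lset alpha tau ->
  tau = [set p.2 | p in L] /\ forall i, nat_of_ord (alpha i) = #|[set p in L | p.1 == i]|.
Proof.
rewrite inE => /existsP[rr /and3P[/eqP -> _ /forallP fibres]]; split.
  apply/setP => t; apply/idP/imsetP => [t_tau | [_ /imsetP[t' t'_tau ->] ->] //].
  by exists (rr t, t); rewrite ?imset_f.
move=> i; rewrite -(eqP (fibres i)).
have -> : [set p in [set (rr t, t) | t in tau] | p.1 == i] =
    (fun t => (rr t, t)) @: [set t in tau | rr t == i].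
  apply/setP => p; rewrite inE; apply/andP/imsetP => [[/imsetP[t t_tau ->] /= rr_t] | [t]].
    by exists t; rewrite // inE t_tau rr_t.
  by rewrite inE => /andP[t_tau rr_t] ->; rewrite imset_f.
by rewrite card_imset // => t t' [].
Qed.

Lemma Lset_inj {n m l : nat} [alpha1 alpha2 : {ffun 'I_n -> 'I_l.+1}] [tau1 tau2 : {set 'I_m}]
  [L : {set 'I_n * 'I_m}] :
  L \in Lset alpha1 tau1 -> L \in Lset alpha2 tau2 -> alpha1 = alpha2 /\ tau1 = tau2.
Proof.
move=> /Lset_data[-> fib1] /Lset_data[-> fib2]; split => //.
by apply/ffunP => i; apply: val_inj; rewrite /= fib1 fib2.
Qed.

Lemma q_entry_neq0 (K : fieldType) (n m l : nat) (sigmaj : {set 'I_m})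
  (S : {set 'I_n * 'I_m}) (alpha : {ffun 'I_n -> 'I_l.+1}) (rho : {set 'I_m}) :
  (@q_entry K n m l sigmaj S alpha rho != 0) =
  (sigmaj \subset rho) && (S \in Lset alpha (rho :\: sigmaj)).
Proof.
rewrite /q_entry; case: ifP => [_ /= | _]; last by rewrite eqxx.
rewrite -big_mkcondr /=.
have [S_in | S_out] := boolP (S \in Lset alpha (rho :\: sigmaj)).
  rewrite (big_pred1 S) => [|L /=]; last by case: eqP => [-> | _]; rewrite ?S_in ?andbF.
  by rewrite /wedge_sign /col_sign !mulf_eq0 !expf_eq0 oppr_eq0 oner_eq0 !andbF.
rewrite big_pred0 ?mulr0 ?eqxx // => L; apply/andP => -[L_in /eqP L_S].
by move: S_out; rewrite -L_S L_in.
Qed.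

Section StackedMap.

Variable K : fieldType.
Context {n m l r : nat} (sigma : 'I_r -> {set 'I_m}).
Hypothesis sigma_size : forall j, #|sigma j| = n.
Hypothesis l_gt0 : (0 < l)%N.

Let M := @qmatrix K n m l r sigma.

Lemma qmatrix_neq0 a b : (M a b != 0) =
  (sigma (enum_val a).1 \subset (enum_val b).2) &&
  ((enum_val a).2 \in Lset (enum_val b).1 ((enum_val b).2 :\: sigma (enum_val a).1)).
Proof. by rewrite /M /qmatrix mxE q_entry_neq0. Qed.

(* A row e_S of q^j_l meets a single column: S determines alpha and tau, and
   rho = tau (disjoint union) sigma_j. *)
Lemma qmatrix_row_support a b b' : M a b != 0 -> M a b' != 0 -> b = b'.
Proof.
rewrite !qmatrix_neq0; set s := sigma _.
case E : (enum_val b) => [alpha rho]; case E' : (enum_val b') => [alpha' rho'] /=.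
move=> /andP[s_rho L_in] /andP[s_rho' L_in'].
have [alpha_eq tau_eq] := Lset_inj L_in L_in'.
apply: enum_val_inj; rewrite E E' alpha_eq; congr (_, _).
by rewrite -(setID rho s) -(setID rho' s) (setIidPr s_rho) (setIidPr s_rho') tau_eq.
Qed.

(* A column g^{*(alpha)} (x) f_rho is nonzero iff rho contains some sigma_j:
   then a suitable L in L_{alpha, rho \ sigma_j} exists since |alpha| = l. *)
Lemma qmatrix_col_neq0 b :
  [exists a, M a b != 0] = [exists j, sigma j \subset (enum_val b).2].
Proof.
apply/existsP/existsP => [[a] | [j sigma_rho]].
  by rewrite qmatrix_neq0 => /andP[sub _]; exists (enum_val a).1.
case E : (enum_val b) sigma_rho => [alpha rho] /= sigma_rho.
have /andP[/eqP sum_alpha /eqP card_rho] : (alpha, rho) \in @qcols n m l by rewrite -E enum_valP.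
have i0 : 'I_n.
  case: (pickP (@predT 'I_n)) => [i _ | no_index]; first exact: i.
  by move: l_gt0; rewrite -sum_alpha big_pred0.
have card_tau : #|rho :\: sigma j| = l.
  by rewrite cardsD (setIidPr sigma_rho) card_rho sigma_size addKn.
have [rr fibres] := exists_fibers (rho :\: sigma j) i0 (etrans sum_alpha (esym card_tau)).
pose S := [set (rr t, t) | t in rho :\: sigma j].
have S_in : S \in Lset alpha (rho :\: sigma j) by apply: graph_in_Lset.
have S_row : (j, S) \in @qrows n m l r sigma.
  rewrite inE /= card_imset ?card_tau ?eqxx => [|t t' [] //].
  by apply/forall_inP => _ /imsetP[t /setDP[_ t_out] ->].
by exists (enum_rank_in S_row (j, S)); rewrite qmatrix_neq0 enum_rankK_in // E /= sigma_rho.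
Qed.

Lemma card_qmatrix_nonzero_cols : #|nonzero_cols M| =
  (#|[set alpha : {ffun 'I_n -> 'I_l.+1} | \sum_i nat_of_ord (alpha i) == l]| *
   #|[set rho : {set 'I_m} | (#|rho| == n + l) && [exists j, sigma j \subset rho]]|)%N.
Proof.
rewrite -cardsX -(card_imset _ (@enum_val_inj _ (@qcols n m l))).
apply: eq_card => -[alpha rho]; rewrite !inE /= andbA.
apply/imsetP/idP => [[b] | /andP[col_ok covered]].
  rewrite inE qmatrix_col_neq0 => covered b_eq.
  by move: (enum_valP b) covered; rewrite -b_eq /= => /andP[-> ->] ->.
have col_in : (alpha, rho) \in @qcols n m l := col_ok.
exists (enum_rank_in col_in (alpha, rho)); last by rewrite enum_rankK_in.
by rewrite inE qmatrix_col_neq0 enum_rankK_in.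
Qed.

End StackedMap.

Theorem lemma5p5 (K : fieldType) (n m r l : nat) (sigma : 'I_r -> {set 'I_m})
  (hnm : (n <= m)%N)
  (hsize : forall j, #|sigma j| = n)
  (hdisj : forall j1 j2, j1 != j2 -> [disjoint sigma j1 & sigma j2])
  (hl : (1 <= l)%N) :
  (\rank (@qmatrix K n m l r sigma))%:Z =
    ('C(n + l - 1, l))%:Z *
    \sum_(1 <= i < r.+1)
       ((-1) ^+ (i + 1) * ('C(r, i))%:Z *
        binz (m%:Z - (i * n)%N%:Z) (l%:Z - ((i - 1) * n)%N%:Z)).
Proof.
rewrite (mxrank_nonzero_cols _ (qmatrix_row_support K sigma)).
rewrite (card_qmatrix_nonzero_cols K sigma hsize hl) PoszM (card_compositions n hl).
rewrite (card_covering_sets (n + l) hsize hdisj) !card_ord.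
congr (_ * _); apply: eq_big_nat => i /andP[i_gt0 _]; congr (_ * binz _ _).
(* (n + l) - i n = l - (i - 1) n for i >= 1 *)
by case: i i_gt0 => // i _; rewrite subn1 mulSn !PoszD opprD addrACA subrr add0r.
Qed.
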